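(* Let $E/\mathbb{Q}$ be given by the model $y^2=x^3+Ax+B$ ($A,B\in\mathbb{Z}$) described in the context and $X=\max\{|A|^3,|B|^2\}$. Let $P,Q\in E(\mathbb{Q})$ satisfy $X^{1/6}\le x(P)<x(Q)$ and $x(P)=x_1/s$, $x(Q)=x_2/s$ with $x_1,x_2\in\mathbb{Z}$, $s$ a positive integer, and $\gcd(x_1,s)=\gcd(x_2,s)=1$. Then $h(P+Q)\le h(P)+2h(Q)+2.9$.
   Context: The model is obtained from a global minimal Weierstrass equation of $E$ by the substitution $x\mapsto \frac{1}{36}(x-3b_2)$, $y\mapsto \frac12(\frac{y}{108}-\frac{a_1}{36}(x-3b_2)-a_3)$. $h$ is the absolute logarithmic Weil height and $h(P)=h(x(P))$. *)

From HB Require Import structures.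
From mathcomp Require Import all_boot all_order all_algebra.
From mathcomp Require Import all_classical all_reals all_analysis.
Set Implicit Arguments. Unset Strict Implicit. Unset Printing Implicit Defensive.
Import Order.TTheory GRing.Theory Num.Theory.
Local Open Scope ring_scope.

(* Standard quantities attached to a Weierstrass equation
   y^2 + a1 xy + a3 y = x^3 + a2 x^2 + a4 x + a6 (Silverman, III.1). *)
Section WeierstrassQuantities.
Variable K : comNzRingType.
Definition wb2 (a1 a2 a3 a4 a6 : K) : K := a1 ^+ 2 + 4%:R * a2.
Definition wb4 (a1 a2 a3 a4 a6 : K) : K := 2%:R * a4 + a1 * a3.
Definition wb6 (a1 a2 a3 a4 a6 : K) : K := a3 ^+ 2 + 4%:R * a6.
Definition wb8 (a1 a2 a3 a4 a6 : K) : K :=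
  a1 ^+ 2 * a6 + 4%:R * a2 * a6 - a1 * a3 * a4 + a2 * a3 ^+ 2 - a4 ^+ 2.
Definition wc4 (a1 a2 a3 a4 a6 : K) : K :=
  wb2 a1 a2 a3 a4 a6 ^+ 2 - 24%:R * wb4 a1 a2 a3 a4 a6.
Definition wc6 (a1 a2 a3 a4 a6 : K) : K :=
  - wb2 a1 a2 a3 a4 a6 ^+ 3 + 36%:R * wb2 a1 a2 a3 a4 a6 * wb4 a1 a2 a3 a4 a6
  - 216%:R * wb6 a1 a2 a3 a4 a6.
Definition wdisc (a1 a2 a3 a4 a6 : K) : K :=
  - wb2 a1 a2 a3 a4 a6 ^+ 2 * wb8 a1 a2 a3 a4 a6 - 8%:R * wb4 a1 a2 a3 a4 a6 ^+ 3
  - 27%:R * wb6 a1 a2 a3 a4 a6 ^+ 2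
  + 9%:R * wb2 a1 a2 a3 a4 a6 * wb4 a1 a2 a3 a4 a6 * wb6 a1 a2 a3 a4 a6.
End WeierstrassQuantities.

Definition is_intq (q : rat) : bool := denq q == 1.

(* Coefficients of the equation obtained by the change of variables
   x = u^2 x' + r, y = u^3 y' + s u^2 x' + t (Silverman, Table 3.1). *)
Definition tr_a1 (a1 a2 a3 a4 a6 u r s t : rat) : rat := (a1 + 2%:R * s) / u.
Definition tr_a2 (a1 a2 a3 a4 a6 u r s t : rat) : rat :=
  (a2 - s * a1 + 3%:R * r - s ^+ 2) / u ^+ 2.
Definition tr_a3 (a1 a2 a3 a4 a6 u r s t : rat) : rat :=
  (a3 + r * a1 + 2%:R * t) / u ^+ 3.
Definition tr_a4 (a1 a2 a3 a4 a6 u r s t : rat) : rat :=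
  (a4 - s * a3 + 2%:R * r * a2 - (t + r * s) * a1 + 3%:R * r ^+ 2
   - 2%:R * s * t) / u ^+ 4.
Definition tr_a6 (a1 a2 a3 a4 a6 u r s t : rat) : rat :=
  (a6 + r * a4 + r ^+ 2 * a2 + r ^+ 3 - t * a3 - t ^+ 2 - r * t * a1) / u ^+ 6.

(* (a1,...,a6) is a global minimal Weierstrass equation (over Q) of the
   elliptic curve it defines: integral, nonsingular, and its discriminant
   has minimal absolute value among all integral Weierstrass equations of
   the same curve (i.e. Q-isomorphic via an admissible change of variables). *)
Definition global_minimal (a1 a2 a3 a4 a6 : int) : Prop :=
  wdisc a1 a2 a3 a4 a6 != 0 /\
  forall u r s t : rat, u != 0 ->
    let b1 := tr_a1 a1%:~R a2%:~R a3%:~R a4%:~R a6%:~R u r s t in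
    let b2 := tr_a2 a1%:~R a2%:~R a3%:~R a4%:~R a6%:~R u r s t in
    let b3 := tr_a3 a1%:~R a2%:~R a3%:~R a4%:~R a6%:~R u r s t in
    let b4 := tr_a4 a1%:~R a2%:~R a3%:~R a4%:~R a6%:~R u r s t in
    let b6 := tr_a6 a1%:~R a2%:~R a3%:~R a4%:~R a6%:~R u r s t in
    [&& is_intq b1, is_intq b2, is_intq b3, is_intq b4 & is_intq b6] ->
    `|(wdisc a1 a2 a3 a4 a6)%:~R : rat| <= `|wdisc b1 b2 b3 b4 b6|.

(* Short model y^2 = x^3 + A x + B obtained from the minimal model by
   x |-> (x - 3 b2)/36, y |-> (y/108 - a1 (x - 3 b2)/36 - a3)/2:
   A = -27 c4, B = -54 c6. *)
Definition shortA (a1 a2 a3 a4 a6 : int) : int := - 27%:R * wc4 a1 a2 a3 a4 a6.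
Definition shortB (a1 a2 a3 a4 a6 : int) : int := - 54%:R * wc6 a1 a2 a3 a4 a6.

Inductive point := Inf | Aff of rat & rat.

Definition on_curve (A B : rat) (P : point) : bool :=
  if P is Aff x y then y ^+ 2 == x ^+ 3 + A * x + B else true.

Definition addE (A B : rat) (P Q : point) : point :=
  match P, Q with
  | Inf, _ => Q
  | _, Inf => P
  | Aff x1 y1, Aff x2 y2 =>
      if (x1 == x2) && (y1 == - y2) then Inf else
      let l := if x1 == x2 then (3%:R * x1 ^+ 2 + A) / (2%:R * y1)
               else (y2 - y1) / (x2 - x1) in
      let x3 := l ^+ 2 - x1 - x2 in
      Aff x3 (l * (x1 - x3) - y1)
  end.

Definition hrat (R : realType) (q : rat) : R :=
  ln (Num.max (`|numq q|%:~R) ((denq q)%:~R)).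

Definition hpt (R : realType) (P : point) : R :=
  if P is Aff x _ then hrat R x else 0.

(* From X^(1/6) <= x(P) we get
   |A| <= x(P)^2 and |B| <= x(P)^3, hence y^2 <= 3 x^3 at P and at Q, and the
   chord formula
     x(P+Q) (x(Q) - x(P))^2 = x(P) x(Q) (x(P) + x(Q)) + A (x(P) + x(Q)) + 2 B - 2 y(P) y(Q)
   bounds |x(P+Q)| (x(Q) - x(P))^2 by 12 x(P) x(Q)^2.  Multiplied by s^3 the
   right-hand side is an integer (y(P) y(Q) s^3 is a rational number whose
   square is an integer), so s (x2 - x1)^2 x(P+Q) is an integer of absolute
   value at most 12 x1 x2^2.  Thus the numerator and denominator of x(P+Q) are
   at most 12 max(x1, s) max(x2, s)^2, i.e. H(P+Q) <= 12 H(P) H(Q)^2, and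
   ln 12 < 2.9. *)

From HB Require Import structures.
From mathcomp Require Import all_boot all_order all_algebra.
From mathcomp Require Import all_classical all_reals all_analysis.
From mathcomp Require Import ring lra.
Import Order.TTheory GRing.Theory Num.Theory.
Set Implicit Arguments. Unset Strict Implicit. Unset Printing Implicit Defensive.
Local Open Scope ring_scope.

Lemma coprimez_denq_numq (x : rat) : coprimez (denq x) (numq x).
Proof. by rewrite coprimezE coprime_sym; exact: coprime_num_den. Qed.

Lemma denq_dvdz_of_mul_int (x : rat) (k : int) :
  x * k%:~R \is a Num.int -> (denq x %| k)%Z.
Proof.
move=> /numqK xk.
have e : numq x * k = numq (x * k%:~R) * denq x.
  by apply: (@intr_inj rat); rewrite !intrM xk numqE mulrAC.
have : (denq x %| numq x * k)%Z by rewrite e dvdz_mull.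
by rewrite (Gauss_dvdzr _ (coprimez_denq_numq x)).
Qed.

Lemma Qint_of_sqr (t : rat) : t ^+ 2 \is a Num.int -> t \is a Num.int.
Proof.
move=> t2.
have : (denq t %| 1 * numq t)%Z.
  apply: denq_dvdz_of_mul_int.
  by rewrite mul1r numqE mulrA -expr2 rpredM ?intr_int.
rewrite (Gauss_dvdzl _ (coprimez_denq_numq t)) dvdz1 => /eqP d1.
by rewrite Qint_def -[denq t]gtz0_abs ?denq_gt0 // d1.
Qed.

Lemma denq_le_of_mul_int (x : rat) (k : int) :
  0 < k -> x * k%:~R \is a Num.int -> denq x <= k.
Proof.
move=> k_gt0 /denq_dvdz_of_mul_int dvd.
have : (`|denq x| <= `|k|)%N by apply: dvdn_leq; rewrite ?absz_gt0 ?gt_eqF.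
by rewrite -lez_nat !abszE !gtr0_norm ?denq_gt0.
Qed.

Lemma hrat_frac (R : realType) (n d : int) :
  0 <= n -> 0 < d -> coprimez n d ->
  hrat R (n%:~R / d%:~R) = ln (Num.max n%:~R d%:~R).
Proof.
move=> n_ge0 d_gt0; rewrite coprimezE => cop.
rewrite /hrat (coprimeq_num cop) (coprimeq_den cop) gtr0_sg // mul1r.
by rewrite gt_eqF // (gtr0_norm d_gt0) (ger0_norm n_ge0).
Qed.

Lemma hrat_le_ln (R : realType) (x : rat) (K : R) :
  `|numq x|%:~R <= K -> (denq x)%:~R <= K -> hrat R x <= ln K.
Proof.
move=> num_le den_le.
have den_gt0 : (0 : R) < (denq x)%:~R by rewrite ltr0z denq_gt0.
rewrite /hrat ler_ln ?ge_max ?num_le ?posrE //; last exact: lt_le_trans den_le.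
by rewrite lt_max den_gt0 orbT.
Qed.

Lemma ln12_le (R : realType) : ln (12%:R : R) <= 29%:R / 10%:R.
Proof.
(* 12 <= 1.29 ^ 10 <= exp (0.29) ^ 10 *)
have e : (29%:R / 10%:R : R) = 10%:R * (29%:R / 100%:R) by field.
have h : (12%:R : R) <= expR (29%:R / 10%:R).
  rewrite e expRM_natl.
  have e1 : 1 + 29%:R / 100%:R <= expR (29%:R / 100%:R : R) := expR_ge1Dx _.
  apply: le_trans (_ : (1 + 29%:R / 100%:R) ^+ 10 <= _); first lra.
  by apply: lerXn2r; rewrite ?qualifE //=; lra.
by rewrite -(expRK (29%:R / 10%:R)) ler_ln ?posrE ?expR_gt0.
Qed.

Lemma expn_le_of_powR_inv_le (R : realType) (x y : R) (n : nat) :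
  (0 < n)%N -> 0 <= x -> x `^ n%:R^-1 <= y -> x <= y ^+ n.
Proof.
move=> n_gt0 x_ge0 le_xy.
have -> : x = (x `^ n%:R^-1) ^+ n.
  by rewrite -powR_mulrn ?powR_ge0 // -powRrM mulVf ?pnatr_eq0 -?lt0n // powRr1.
by apply: lerXn2r; rewrite ?nnegrE ?powR_ge0 //; exact: le_trans (powR_ge0 _ _) le_xy.
Qed.

Lemma norm_le_of_expn_le (F : realDomainType) (c u : F) (m n : nat) :
  (0 < n)%N -> 0 <= u -> `|c| ^+ n <= u ^+ (m * n) -> `|c| <= u ^+ m.
Proof.
move=> n_gt0 u_ge0; rewrite exprM.
by rewrite ler_pXn2r // nnegrE ?exprn_ge0.
Qed.

Lemma ler_pM_sqr (F : realDomainType) (p q m n : F) :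
  0 <= p -> p <= m -> 0 <= q -> q <= n -> p * q ^+ 2 <= m * n ^+ 2.
Proof.
move=> p_ge0 le_pm q_ge0 le_qn.
by rewrite ler_pM ?exprn_ge0 // lerXn2r ?nnegrE ?(le_trans q_ge0).
Qed.

Lemma short_coeffs_le (R : realType) (A B : int) (x : rat) : 0 <= x ->
  powR ((Num.max (`|A| ^+ 3) (`|B| ^+ 2))%:~R : R) 6%:R^-1 <= ratr x ->
  `|A%:~R : rat| <= x ^+ 2 /\ `|B%:~R : rat| <= x ^+ 3.
Proof.
move=> x_ge0 le_x.
have X_le : (Num.max (`|A| ^+ 3) (`|B| ^+ 2))%:~R <= x ^+ 6 :> rat.
  rewrite -(ler_rat R) rmorphXn ratr_int /=.
  by apply: expn_le_of_powR_inv_le => //; rewrite ler0z le_max exprn_ge0.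
split.
  apply: (@norm_le_of_expn_le _ _ _ 2 3) => //; apply: le_trans X_le.
  by rewrite -intr_norm -rmorphXn ler_int le_max lexx.
apply: (@norm_le_of_expn_le _ _ _ 3 2) => //; apply: le_trans X_le.
by rewrite -intr_norm -rmorphXn ler_int le_max lexx orbT.
Qed.

Definition chord_x (F : fieldType) (u v yP yQ : F) : F :=
  ((yQ - yP) / (v - u)) ^+ 2 - u - v.

Lemma chord_x_mul_sqr (F : fieldType) (u v yP yQ : F) : u != v ->
  chord_x u v yP yQ * (v - u) ^+ 2
  = yP ^+ 2 + yQ ^+ 2 - 2%:R * (yP * yQ) - (u + v) * (v - u) ^+ 2.
Proof. by rewrite eq_sym -subr_eq0 => vu_neq0; rewrite /chord_x; field. Qed.

Section ChordBound.
Variables (F : realFieldType) (a b u v yP yQ : F).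
Hypotheses (u_ge0 : 0 <= u) (le_uv : u <= v).
Hypotheses (a_le : `|a| <= u ^+ 2) (b_le : `|b| <= u ^+ 3).
Hypotheses (onP : yP ^+ 2 = u ^+ 3 + a * u + b) (onQ : yQ ^+ 2 = v ^+ 3 + a * v + b).

Lemma weierstrass_rhs_le (x : F) : u <= x -> x ^+ 3 + a * x + b <= 3%:R * x ^+ 3.
Proof.
move=> le_ux; have x_ge0 : 0 <= x := le_trans u_ge0 le_ux.
have u2_le : u ^+ 2 <= x ^+ 2 by rewrite lerXn2r ?nnegrE.
have u3_le : u ^+ 3 <= x ^+ 3 by rewrite lerXn2r ?nnegrE.
have ax_le : a * x <= x ^+ 3.
  by rewrite exprSr ler_wpM2r // (le_trans (ler_norm a)) // (le_trans a_le).
have := le_trans (ler_norm b) b_le; lra.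
Qed.

Lemma mul_y_le : - (3%:R * u * v ^+ 2) <= yP * yQ <= 3%:R * u * v ^+ 2.
Proof.
have v_ge0 : 0 <= v := le_trans u_ge0 le_uv.
have c_ge0 : 0 <= 3%:R * u * v ^+ 2 by rewrite !mulr_ge0 ?exprn_ge0.
rewrite -ler_norml -(ler_pXn2r (_ : (0 < 2)%N)) ?nnegrE // real_normK ?num_real //.
have yP2_le : yP ^+ 2 <= 3%:R * u ^+ 3 by rewrite onP weierstrass_rhs_le.
have yQ2_le : yQ ^+ 2 <= 3%:R * v ^+ 3 by rewrite onQ weierstrass_rhs_le.
have uv_le : u ^+ 3 * v ^+ 3 <= u ^+ 2 * v ^+ 4.
  have -> : u ^+ 3 * v ^+ 3 = u ^+ 2 * v ^+ 3 * u by ring.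
  have -> : u ^+ 2 * v ^+ 4 = u ^+ 2 * v ^+ 3 * v by ring.
  by rewrite ler_wpM2l ?mulr_ge0 ?exprn_ge0.
rewrite exprMn; apply: le_trans (ler_pM _ _ yP2_le yQ2_le) _; rewrite ?sqr_ge0 //.
have -> : (3%:R * u * v ^+ 2) ^+ 2 = 9%:R * (u ^+ 2 * v ^+ 4) by ring.
lra.
Qed.

Lemma norm_chord_x_mul_le :
  `|chord_x u v yP yQ| * (v - u) ^+ 2 <= 12%:R * u * v ^+ 2.
Proof.
have v_ge0 : 0 <= v := le_trans u_ge0 le_uv.
have [<-|neq_uv] := eqVneq u v.
  by rewrite subrr expr2 !mulr0 !mulr_ge0 ?exprn_ge0.
rewrite -[(v - u) ^+ 2]ger0_norm ?sqr_ge0 // -normrM chord_x_mul_sqr // onP onQ.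
have /andP[y_ge y_le] := mul_y_le.
have /andP[a_ge a_le'] : - u ^+ 2 <= a <= u ^+ 2 by rewrite -ler_norml.
have /andP[b_ge b_le'] : - u ^+ 3 <= b <= u ^+ 3 by rewrite -ler_norml.
have uv_ge0 : 0 <= u + v by rewrite addr_ge0.
have au_le : a * (u + v) <= u ^+ 2 * (u + v) by rewrite ler_wpM2r.
have au_ge : - (u ^+ 2 * (u + v)) <= a * (u + v) by rewrite -mulNr ler_wpM2r.
have uuv_le : u ^+ 2 * v <= u * v ^+ 2.
  have -> : u ^+ 2 * v = u * v * u by ring.
  have -> : u * v ^+ 2 = u * v * v by ring.
  by rewrite ler_wpM2l ?mulr_ge0.
have uuu_le : u ^+ 3 <= u ^+ 2 * v by rewrite exprSr ler_wpM2l ?exprn_ge0.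
have uvuv_ge0 : 0 <= u * v * (u + v) by rewrite !mulr_ge0.
by rewrite ler_norml; apply/andP; split; lra.
Qed.
End ChordBound.

Lemma sqr_y_scaled_int (A B n s : int) (y : rat) : s != 0 ->
  y ^+ 2 = (n%:~R / s%:~R) ^+ 3 + A%:~R * (n%:~R / s%:~R) + B%:~R ->
  y ^+ 2 * s%:~R ^+ 3 \is a Num.int.
Proof.
rewrite -(intr_eq0 rat) => s_neq0 ->.
have -> : ((n%:~R / s%:~R) ^+ 3 + A%:~R * (n%:~R / s%:~R) + B%:~R) * s%:~R ^+ 3
    = (n ^+ 3 + A * n * s ^+ 2 + B * s ^+ 3)%:~R :> rat.
  by rewrite !(rmorphD, rmorphM, rmorphXn) /=; field.
exact: intr_int.
Qed.

Section ChordHeight.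
Variables (A B x1 x2 s : int) (yP yQ : rat).
Let u : rat := x1%:~R / s%:~R.
Let v : rat := x2%:~R / s%:~R.
Hypotheses (s_gt0 : 0 < s) (x1_ge0 : 0 <= x1) (lt_x12 : x1 < x2).
Hypotheses (A_le : `|A%:~R| <= u ^+ 2) (B_le : `|B%:~R| <= u ^+ 3).
Hypotheses (onP : yP ^+ 2 = u ^+ 3 + A%:~R * u + B%:~R)
           (onQ : yQ ^+ 2 = v ^+ 3 + A%:~R * v + B%:~R).

Let s_neq0 : s%:~R != 0 :> rat. Proof. by rewrite intr_eq0 gt_eqF. Qed.

Lemma intr_scaled_gap : (s * (x2 - x1) ^+ 2)%:~R = (v - u) ^+ 2 * s%:~R ^+ 3 :> rat.
Proof. by rewrite /u /v !(rmorphM, rmorphXn, rmorphB) /=; field. Qed.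

Lemma chord_x_scaled_int :
  chord_x u v yP yQ * (s * (x2 - x1) ^+ 2)%:~R \is a Num.int.
Proof.
have uv_neq : u != v.
  apply: contraTneq lt_x12 => /(divIf s_neq0) /intr_inj ->.
  by rewrite ltxx.
have yP2_int := sqr_y_scaled_int (lt0r_neq0 s_gt0) onP.
have yQ2_int := sqr_y_scaled_int (lt0r_neq0 s_gt0) onQ.
have yPyQ_int : yP * yQ * s%:~R ^+ 3 \is a Num.int.
  apply: Qint_of_sqr.
  have -> : (yP * yQ * s%:~R ^+ 3) ^+ 2
      = (yP ^+ 2 * s%:~R ^+ 3) * (yQ ^+ 2 * s%:~R ^+ 3) by ring.
  exact: rpredM.
rewrite intr_scaled_gap mulrA chord_x_mul_sqr //.
have -> : (yP ^+ 2 + yQ ^+ 2 - 2%:R * (yP * yQ) - (u + v) * (v - u) ^+ 2) * s%:~R ^+ 3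
    = yP ^+ 2 * s%:~R ^+ 3 + yQ ^+ 2 * s%:~R ^+ 3 - (yP * yQ * s%:~R ^+ 3) *+ 2
      - ((x1 + x2) * (x2 - x1) ^+ 2)%:~R.
  by rewrite /u /v !(rmorphM, rmorphXn, rmorphB, rmorphD) /=; field.
by rewrite rpredB ?intr_int // rpredB ?rpredMn // rpredD.
Qed.

Lemma norm_chord_x_scaled_le :
  `|chord_x u v yP yQ| * (s * (x2 - x1) ^+ 2)%:~R <= (12 * x1 * x2 ^+ 2)%:~R.
Proof.
have s_ge0 : 0 <= s%:~R :> rat by rewrite ler0z (ltW s_gt0).
have u_ge0 : 0 <= u by rewrite /u divr_ge0 // ler0z.
have le_uv : u <= v by rewrite /u /v ler_pM2r ?invr_gt0 ?ltr0z // ler_int (ltW lt_x12).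
have -> : (12 * x1 * x2 ^+ 2)%:~R = 12%:R * u * v ^+ 2 * s%:~R ^+ 3 :> rat.
  by rewrite /u /v !(rmorphM, rmorphXn) /=; field.
rewrite intr_scaled_gap mulrA ler_wpM2r ?exprn_ge0 //.
exact: (norm_chord_x_mul_le u_ge0 le_uv A_le B_le onP onQ).
Qed.

Let gap_gt0 : 0 < s * (x2 - x1) ^+ 2.
Proof. by rewrite mulr_gt0 ?exprn_gt0 ?subr_gt0. Qed.

Lemma denq_chord_x_le : denq (chord_x u v yP yQ) <= s * x2 ^+ 2.
Proof.
apply: le_trans (denq_le_of_mul_int gap_gt0 chord_x_scaled_int) _.
have x2_ge0 : 0 <= x2 := le_trans x1_ge0 (ltW lt_x12).
by rewrite ler_pM2l // lerXn2r ?nnegrE ?subr_ge0 ?gerBl // ltW.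
Qed.

Lemma norm_numq_chord_x_le : `|numq (chord_x u v yP yQ)| <= 12 * x1 * x2 ^+ 2.
Proof.
rewrite -(ler_int rat) intr_norm numqE normrM.
rewrite [`|(denq _)%:~R|]gtr0_norm ?ltr0z ?denq_gt0 //.
apply: le_trans norm_chord_x_scaled_le.
by rewrite ler_wpM2l ?normr_ge0 // ler_int denq_le_of_mul_int ?chord_x_scaled_int.
Qed.

Hypotheses (coprime_x1s : coprimez x1 s) (coprime_x2s : coprimez x2 s).

Lemma hrat_chord_x_le (R : realType) :
  hrat R (chord_x u v yP yQ) <= ln 12%:R + hrat R u + 2%:R * hrat R v.
Proof.
have x2_ge0 : 0 <= x2 := le_trans x1_ge0 (ltW lt_x12).
rewrite /u /v !hrat_frac //.
set m1 : R := Num.max _ _; set m2 : R := Num.max _ _.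
have s_gt0R : (0 : R) < s%:~R by rewrite ltr0z.
have x1_le : x1%:~R <= m1 by rewrite le_max lexx.
have s_le1 : s%:~R <= m1 by rewrite le_max lexx orbT.
have x2_le : x2%:~R <= m2 by rewrite le_max lexx.
have s_le2 : s%:~R <= m2 by rewrite le_max lexx orbT.
have m1_gt0 : 0 < m1 := lt_le_trans s_gt0R s_le1.
have m2_gt0 : 0 < m2 := lt_le_trans s_gt0R s_le2.
have m_ge0 : 0 <= m1 * m2 ^+ 2 by rewrite mulr_ge0 ?exprn_ge0 ?ltW.
have -> : ln 12%:R + ln m1 + 2%:R * ln m2 = ln (12%:R * (m1 * m2 ^+ 2)).
  rewrite lnM ?posrE ?mulr_gt0 ?exprn_gt0 // lnM ?posrE ?exprn_gt0 //.
  rewrite lnXn // mulr2n; lra.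
apply: hrat_le_ln.
  apply: le_trans (_ : (12 * (x1 * x2 ^+ 2))%:~R <= _).
    by rewrite ler_int mulrA norm_numq_chord_x_le.
  rewrite rmorphM rmorphM rmorphXn /= ler_wpM2l // ler_pM_sqr // ?ler0z //.
apply: le_trans (_ : (s * x2 ^+ 2)%:~R <= _); first by rewrite ler_int denq_chord_x_le.
rewrite rmorphM rmorphXn /=.
apply: le_trans (ler_pM_sqr (ltW s_gt0R) s_le1 _ x2_le) _; first by rewrite ler0z.
by rewrite ler_peMl // ler1n.
Qed.
End ChordHeight.

Theorem corollary3p3 (R : realType) (a1 a2 a3 a4 a6 : int)
    (xP yP xQ yQ : rat) (x1 x2 : int) (s : nat) :
  global_minimal a1 a2 a3 a4 a6 ->
  let A : int := shortA a1 a2 a3 a4 a6 in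
  let B : int := shortB a1 a2 a3 a4 a6 in
  let X : int := Num.max (`|A| ^+ 3) (`|B| ^+ 2) in
  on_curve A%:~R B%:~R (Aff xP yP) ->
  on_curve A%:~R B%:~R (Aff xQ yQ) ->
  powR (X%:~R : R) (6%:R^-1) <= ratr xP ->
  xP < xQ ->
  (0 < s)%N ->
  xP = x1%:~R / s%:R ->
  xQ = x2%:~R / s%:R ->
  coprimez x1 s%:Z -> coprimez x2 s%:Z ->
  hpt R (addE A%:~R B%:~R (Aff xP yP) (Aff xQ yQ))
    <= hpt R (Aff xP yP) + 2 * hpt R (Aff xQ yQ) + 29%:R / 10%:R.
Proof.
move=> _ A B X /eqP onP /eqP onQ X_le_xP lt_PQ s_gt0 eP eQ cop1 cop2.
rewrite pmulrn in eP eQ.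
have s_gt0z : 0 < s%:Z by rewrite ltz_nat.
have xP_ge0 : 0 <= xP.
  by rewrite -(ler0q R); exact: le_trans (powR_ge0 _ _) X_le_xP.
have [A_le B_le] := short_coeffs_le xP_ge0 X_le_xP.
have s_neq0 : s%:~R != 0 :> rat by rewrite intr_eq0 gt_eqF.
have ex1 : x1%:~R = xP * s%:~R by rewrite eP mulfVK.
have ex2 : x2%:~R = xQ * s%:~R by rewrite eQ mulfVK.
have x1_ge0 : 0 <= x1 by rewrite -(ler_int rat) ex1 mulr_ge0 ?ler0z.
have lt_x12 : x1 < x2 by rewrite -(ltr_int rat) ex1 ex2 ltr_pM2r ?ltr0z.
rewrite /addE (lt_eqF lt_PQ) /=.
rewrite eP eQ in onP onQ A_le B_le *.
have := ln12_le R.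
have := hrat_chord_x_le s_gt0z x1_ge0 lt_x12 A_le B_le onP onQ cop1 cop2 R.
rewrite /chord_x; lra.
Qed.
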